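(* Let $r:\mathbb{R}^\ell\to\mathbb{R}^m$ be differentiable with Jacobian $J_r$, let $\mu>0$ be differentiable near $x$ with $\eta=\log\mu$, and suppose $J_r(x)$ has full column rank. Let $p=-J_r^+r$ (all quantities at $x$), $\beta=1-\langle p,\nabla\eta\rangle$, $P=I-J_rJ_r^+$, $\omega=\|Pr\|_2^2\|(J_r^+)^T\nabla\eta\|_2^2+\beta^2$, and assume $\omega\ne0$. Then the Gauss--Newton step for the deflated residual $\mu r$, namely $\hat p=-J_{\mu r}(x)^+\mu(x)r(x)$ with $J_{\mu r}=\mu J_r+r\nabla\mu^T$, satisfies $$\hat p=\beta_1p+\beta_2(J_r^TJ_r)^{-1}\nabla\eta,\qquad \beta_1=\frac{\beta}{\omega},\quad \beta_2=-\frac{\|Pr\|_2^2}{\omega}.$$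
   Context: $A^+$ denotes the Moore--Penrose pseudoinverse; for full column rank $J_r$, $J_r^+=(J_r^TJ_r)^{-1}J_r^T$. $\nabla\eta=\mu^{-1}\nabla\mu$. *)

From HB Require Import structures.
From mathcomp Require Import all_boot all_order all_algebra.
From mathcomp Require Import all_classical all_reals all_analysis.
Set Implicit Arguments. Unset Strict Implicit. Unset Printing Implicit Defensive.
Import Order.TTheory GRing.Theory Num.Theory.
Import numFieldNormedType.Exports.
Local Open Scope ring_scope.
Local Open Scope classical_set_scope.

(* Vectors of R^n are encoded as row vectors 'rV[R]_n for the functions
   (domain of differentiation), and as column vectors 'cV[R]_n in the
   linear-algebra formulas. *)

Definition penrose (R : realType) (m n : nat) (A : 'M[R]_(m, n)) (X : 'M[R]_(n, m)) : Prop :=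
  [/\ A *m X *m A = A, X *m A *m X = X,
      (A *m X)^T = A *m X & (X *m A)^T = X *m A].

(* Moore--Penrose pseudoinverse A^+ (the unique X satisfying the Penrose
   conditions; it always exists over the reals). *)
Definition mpinv (R : realType) (m n : nat) (A : 'M[R]_(m, n)) : 'M[R]_(n, m) :=
  xget 0 (fun X => penrose A X).

(* The usual m x l Jacobian matrix of r : R^l -> R^m at x
   (MathComp-Analysis' 'J is its transpose, acting on row vectors). *)
Definition Jac (R : realType) (l m : nat) (r : 'rV[R]_l -> 'rV[R]_m) (x : 'rV[R]_l)
  : 'M[R]_(m, l) := (jacobian r x)^T.

Definition grad (R : realType) (l : nat) (mu : 'rV[R]_l -> R) (x : 'rV[R]_l) : 'cV[R]_l :=
  jacobian (fun y => const_mx (mu y) : 'rV[R]_1) x.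

Definition dotc (R : realType) (n : nat) (u v : 'cV[R]_n) : R := (u^T *m v) 0 0.
Definition sqnorm2 (R : realType) (n : nat) (v : 'cV[R]_n) : R := dotc v v.

From HB Require Import structures.
From mathcomp Require Import all_boot all_order all_algebra.
From mathcomp Require Import all_classical all_reals all_analysis.
From mathcomp Require Import ring.
Import Order.TTheory GRing.Theory Num.Theory.
Import numFieldNormedType.Exports.
Set Implicit Arguments.
Unset Strict Implicit.
Unset Printing Implicit Defensive.
Local Open Scope ring_scope.

(* The Jacobian of mu r is mu (J + r grad(eta)^T), i.e. mu times a rank-one update A
   of J, and a Gauss-Newton step does not change when both the residual and the
   Jacobian are scaled by mu; hence phat = - A^+ r.  Since omega <> 0, A has full
   column rank, so - A^+ r is the unique solution q of the normal equation
   A^T (A q + r) = 0.  For the claimed q this equation reduces, through J^+ J = I,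
   P J = 0 and P^T = P = P^2, to two scalar identities between ||P r||^2,
   ||(J^+)^T grad(eta)||^2 and beta that hold by the definition of omega. *)

Section ScaleDifferential.
Variables (R : numFieldType) (V W : normedModType R).

Lemma scaler_is_bilinear :
  bilinear_for
    (GRing.Scale.Law.clone _ _ *:%R _) (GRing.Scale.Law.clone _ _ *:%R _)
    (@GRing.scale R W).
Proof.
split=> [u'|u] a x y /=.
- by rewrite scalerDl scalerA.
- by rewrite scalerDr scalerA mulrC -scalerA.
Qed.

HB.instance Definition _ := bilinear_isBilinear.Build R R W W _ _
  (@GRing.scale R W) scaler_is_bilinear.

Lemma diff_scalev (k : V -> R) (f : V -> W) x :
  differentiable k x -> differentiable f x ->
  'd (fun y => k y *: f y) x = (fun v => k x *: 'd f x v + 'd k x v *: f x) :> (V -> W).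
Proof.
move=> dk df.
pose s : {bilinear R -> W -> W} := @GRing.scale R W.
have s_cont : continuous (fun p : R * W => s p.1 p.2).
  by move=> p; apply: (@scale_continuous R W p).
have -> : (fun y => k y *: f y) = (fun p : R * W => s p.1 p.2) \o (fun y => (k y, f y)) by [].
rewrite diff_comp ?diff_bilin ?diff_pair //; last exact: differentiable_bilin.
exact: differentiable_pair.
Qed.

End ScaleDifferential.

Lemma trmx_jacobian_scalev (R : numFieldType) (l m : nat) (mu : 'rV[R]_l -> R)
    (r : 'rV[R]_l -> 'rV[R]_m) x :
  differentiable mu x -> differentiable r x ->
  (jacobian (fun y => mu y *: r y) x)^T = mu x *: (jacobian r x)^T
    + (r x)^T *m (jacobian (fun y => const_mx (mu y) : 'rV[R]_1) x)^T.
Proof.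
move=> dmu dr.
have const_mxE : (fun y => const_mx (mu y) : 'rV[R]_1) = (fun y => mu y *: const_mx 1).
  by apply/funext => y; apply/matrixP => i j; rewrite !mxE mulr1.
have dE := diff_scalev dmu dr.
have dconstE := diffZl (const_mx 1 : 'rV[R]_1) dmu.
rewrite /jacobian.
etransitivity; first exact: (f_equal (fun X => (lin1_mx X)^T) dE).
rewrite const_mxE (f_equal (fun X => (lin1_mx X)^T) dconstE).
apply/matrixP => i j; rewrite !mxE big_ord1 !mxE.
by rewrite mulr1 [r x _ _ * _]mulrC.
Qed.

Lemma Jac_scalev (R : realType) (l m : nat) (mu : 'rV[R]_l -> R)
    (r : 'rV[R]_l -> 'rV[R]_m) x :
  differentiable mu x -> differentiable r x ->
  Jac (fun y => mu y *: r y) x = mu x *: Jac r x + (r x)^T *m (grad mu x)^T.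
Proof. exact: trmx_jacobian_scalev. Qed.

Section DotProduct.
Variable R : realType.
Implicit Types (n k : nat).

Lemma dotcC n (u v : 'cV[R]_n) : dotc u v = dotc v u.
Proof. by rewrite /dotc -[u^T *m v]trmxK trmx_mul trmxK mxE. Qed.

Lemma dotc_mulmxr n k (u : 'cV[R]_n) (M : 'M[R]_(n, k)) (v : 'cV[R]_k) :
  dotc u (M *m v) = dotc (M^T *m u) v.
Proof. by rewrite /dotc trmx_mul trmxK mulmxA. Qed.

Lemma dotcDr n (u v w : 'cV[R]_n) : dotc u (v + w) = dotc u v + dotc u w.
Proof. by rewrite /dotc mulmxDr mxE. Qed.

Lemma dotcZr n (u v : 'cV[R]_n) a : dotc u (a *: v) = a * dotc u v.
Proof. by rewrite /dotc -scalemxAr mxE. Qed.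

Lemma dotcNr n (u v : 'cV[R]_n) : dotc u (- v) = - dotc u v.
Proof. by rewrite /dotc mulmxN mxE. Qed.

Lemma dotc0l n (u : 'cV[R]_n) : dotc 0 u = 0.
Proof. by rewrite /dotc trmx0 mul0mx mxE. Qed.

Lemma mulmx_rank_one m n (u : 'cV[R]_m) (g v : 'cV[R]_n) :
  u *m g^T *m v = dotc g v *: u.
Proof. by rewrite -mulmxA [g^T *m v]mx11_scalar mul_mx_scalar. Qed.

Lemma sqnorm2_eq0 n (u : 'cV[R]_n) : sqnorm2 u = 0 -> u = 0.
Proof.
rewrite /sqnorm2 /dotc mxE => /eqP; rewrite psumr_eq0 => [/allP u0|i _].
  apply/matrixP => i j; rewrite (ord1 j) !mxE.
  by move: (u0 i (mem_index_enum i)); rewrite mxE mulf_eq0 orbb => /eqP.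
by rewrite mxE -expr2 sqr_ge0.
Qed.

End DotProduct.

Lemma col_full_mulmx_eq0 (R : fieldType) m n (A : 'M[R]_(m, n)) :
  \rank A = n -> forall v : 'cV[R]_n, A *m v = 0 -> v = 0.
Proof.
move=> rkA v Av0; have /row_fullP[B BA] : row_full A by rewrite /row_full rkA.
by rewrite -[v]mul1mx -BA -mulmxA Av0 mulmx0.
Qed.

Section FullColumnRank.
Variables (R : realType) (m n : nat) (A : 'M[R]_(m, n)).
Hypothesis A_ker0 : forall v : 'cV[R]_n, A *m v = 0 -> v = 0.

Lemma gram_unitmx : A^T *m A \in unitmx.
Proof.
rewrite unitmxE unitfE; apply/negP => /det0P[v v_neq0 vG0].
have Gv0 : A^T *m A *m v^T = 0.
  by rewrite -[A^T *m A]trmxK trmx_mul trmxK -trmx_mul vG0 trmx0.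
have /sqnorm2_eq0/A_ker0 : sqnorm2 (A *m v^T) = 0.
  by rewrite /sqnorm2 dotc_mulmxr mulmxA Gv0 dotc0l.
by move/(congr1 trmx); rewrite trmxK trmx0 => v0; rewrite v0 eqxx in v_neq0.
Qed.

Lemma mpinv_ker0 : mpinv A = invmx (A^T *m A) *m A^T.
Proof.
have G_unit := gram_unitmx; set G := A^T *m A in G_unit *.
have GT : G^T = G by rewrite /G trmx_mul trmxK.
have : exists X, penrose A X.
  exists (invmx G *m A^T); split.
  - by rewrite -!mulmxA -/G mulVmx // mulmx1.
  - by rewrite -!mulmxA [A^T *m (A *m _)]mulmxA -/G mulKmx.
  - by rewrite !trmx_mul trmxK trmx_inv GT mulmxA.
  - by rewrite -mulmxA -/G mulVmx // trmx1.
move=> /(xgetPex 0)[AXA _ AX_sym _]; rewrite /mpinv; set X := xget _ _ in AXA AX_sym *.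
have GX : G *m X = A^T by rewrite /G -mulmxA -AX_sym -trmx_mul AXA.
by rewrite -GX mulmxA mulVmx // mul1mx.
Qed.

Lemma mpinv_normal_eq (b : 'cV[R]_m) (q : 'cV[R]_n) :
  A^T *m (A *m q + b) = 0 -> mpinv A *m b = - q.
Proof.
rewrite mulmxDr mpinv_ker0 => /eqP; rewrite addrC addr_eq0 => /eqP ATb.
by rewrite -mulmxA ATb mulmxN [A^T *m (A *m q)]mulmxA mulKmx ?gram_unitmx.
Qed.

End FullColumnRank.

Lemma mpinvZ_mulmxZ (R : realType) m n (A : 'M[R]_(m, n)) (c : R) (b : 'cV[R]_m) :
  (forall v : 'cV[R]_n, A *m v = 0 -> v = 0) -> c != 0 ->
  mpinv (c *: A) *m (c *: b) = mpinv A *m b.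
Proof.
move=> A_ker0 c_neq0; have cA_ker0 (v : 'cV[R]_n) : (c *: A) *m v = 0 -> v = 0.
  by rewrite -scalemxAl => /eqP; rewrite scaler_eq0 (negbTE c_neq0) => /eqP/A_ker0.
have cc_unit : c * c \is a GRing.unit by rewrite unitfE mulf_neq0.
have trZ : (c *: A)^T = c *: A^T by apply/matrixP => i j; rewrite !mxE.
have gramZ : (c *: A)^T *m (c *: A) = (c * c) *: (A^T *m A).
  by rewrite trZ -scalemxAl -scalemxAr scalerA.
rewrite (mpinv_ker0 cA_ker0) (mpinv_ker0 A_ker0) gramZ trZ.
rewrite invmxZ ?unitmxZ ?gram_unitmx //.
by rewrite -!scalemxAr -!scalemxAl !scalerA divrr // scale1r.
Qed.

Section RankOneUpdate.
Variables (R : realType) (m l : nat) (J : 'M[R]_(m, l)) (b : 'cV[R]_m) (g : 'cV[R]_l).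
Variable Jp : 'M[R]_(l, m).
Hypotheses (gram_unit : J^T *m J \in unitmx) (JpE : Jp = invmx (J^T *m J) *m J^T).

Let Gi := invmx (J^T *m J).
Let p := - (Jp *m b).
Let beta := 1 - dotc p g.
Let P : 'M[R]_m := 1%:M - J *m Jp.
Let a := sqnorm2 (P *m b).
Let c := sqnorm2 (Jp^T *m g).
Let omega := a * c + beta ^+ 2.
Hypothesis omega_neq0 : omega != 0.
Let A := J + b *m g^T.

Let Gi_sym : Gi^T = Gi.
Proof. by rewrite trmx_inv trmx_mul trmxK. Qed.

Let pinv_mulmx : Jp *m J = 1%:M.
Proof. by rewrite JpE -mulmxA mulVmx. Qed.

Let trmx_pinv : Jp^T = J *m Gi.
Proof. by rewrite JpE trmx_mul trmxK Gi_sym. Qed.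

Let proj_mulmx : P *m J = 0.
Proof. by rewrite mulmxBl mul1mx -mulmxA pinv_mulmx mulmx1 subrr. Qed.

Let dotc_g_p : dotc g p = 1 - beta.
Proof. by rewrite /beta dotcC opprB addrC subrK. Qed.

Let dotc_g_Gi_g : dotc g (Gi *m g) = c.
Proof.
rewrite /c /sqnorm2 [RHS]dotc_mulmxr trmxK trmx_pinv !mulmxA pinv_mulmx mul1mx.
exact: dotcC.
Qed.

Let dotc_b_Jp : dotc b (J *m p) = a - sqnorm2 b.
Proof.
have PT : P^T = P by rewrite /P linearB /= trmx1 trmx_mul trmx_pinv JpE mulmxA.
have PP : P *m P = P by rewrite {2}/P mulmxBr mulmx1 mulmxA proj_mulmx mul0mx subr0.
have -> : a = dotc b (P *m b) by rewrite /a /sqnorm2 dotc_mulmxr PT mulmxA PP dotcC.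
rewrite mulmxBl mul1mx -mulmxA dotcDr dotcNr /p mulmxN dotcNr.
by rewrite /sqnorm2 addrAC subrr add0r.
Qed.

Lemma rank_one_update_ker0 (v : 'cV[R]_l) : A *m v = 0 -> v = 0.
Proof.
rewrite mulmxDl mulmx_rank_one; set t := dotc g v => Av0.
have vE : v = t *: p.
  move/(congr1 (mulmx Jp)): Av0; rewrite mulmxDr mulmxA pinv_mulmx mul1mx mulmx0.
  by rewrite -scalemxAr => /eqP; rewrite addr_eq0 => /eqP ->; rewrite scalerN.
have ta0 : t * a = 0.
  move/(congr1 (mulmx P)): Av0; rewrite mulmxDr mulmxA proj_mulmx mul0mx add0r mulmx0.
  by rewrite -scalemxAr /a /sqnorm2 => tPb0; rewrite -dotcZr tPb0 dotcC dotc0l.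
have tbeta0 : t * beta = 0.
  have tE : t = t * (1 - beta) by rewrite {1}/t vE dotcZr dotc_g_p.
  have -> : t * beta = t - t * (1 - beta) by ring.
  by rewrite -tE subrr.
have : t ^+ 2 * omega = 0.
  have -> : t ^+ 2 * omega = (t * a) * (t * c) + (t * beta) ^+ 2 by rewrite /omega; ring.
  by rewrite ta0 tbeta0 mul0r expr0n addr0.
move/eqP; rewrite mulf_eq0 (negbTE omega_neq0) orbF expf_eq0 /= => /eqP t0.
by rewrite vE t0 scale0r.
Qed.

Let dotc_b_JGi_g : dotc b (J *m (Gi *m g)) = beta - 1.
Proof.
rewrite !dotc_mulmxr Gi_sym mulmxA -JpE /beta /p.
by rewrite [dotc (- _) _]dotcC dotcNr [dotc g _]dotcC opprK addrC addKr.
Qed.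

Let beta1 := beta / omega.
Let beta2 := - a / omega.
Let q := beta1 *: p + beta2 *: (Gi *m g).

Lemma rank_one_update_normal_eq : A^T *m (A *m q + b) = 0.
Proof.
have gram_q : J^T *m (J *m q) = - beta1 *: (J^T *m b) + beta2 *: g.
  rewrite mulmxA /q mulmxDr -!scalemxAr /p mulmxN JpE /Gi !mulmxA mulmxV //.
  by rewrite !mul1mx scaleNr scalerN.
have dotc_g_q : dotc g q + 1 = beta1.
  rewrite /q dotcDr !dotcZr dotc_g_p dotc_g_Gi_g /beta1 /beta2.
  by move: omega_neq0; rewrite /omega => ?; field.
have dotc_b_Jq : dotc b (J *m q) = - beta2 - beta1 * dotc b b.
  rewrite /q mulmxDr -!scalemxAr dotcDr !dotcZr dotc_b_Jp dotc_b_JGi_g.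
  by move: omega_neq0; rewrite /beta1 /beta2 /omega /sqnorm2 => ?; field.
have AT : A^T = J^T + g *m b^T by rewrite /A linearD /= trmx_mul trmxK.
rewrite {2}/A mulmxDl mulmx_rank_one -addrA -{2}[b]scale1r -scalerDl dotc_g_q.
set Jq := J *m q in gram_q dotc_b_Jq *.
rewrite AT mulmxDl !mulmxDr gram_q !mulmx_rank_one dotcZr -scalemxAr dotc_b_Jq.
by apply/matrixP => i j; rewrite !mxE; ring.
Qed.

End RankOneUpdate.

Theorem mainTheorem3 (R : realType) (l m : nat)
  (r : 'rV[R]_l -> 'rV[R]_m) (mu : 'rV[R]_l -> R) (x : 'rV[R]_l) :
  (forall y, differentiable r y) ->
  (\forall y \near x, differentiable mu y /\ 0 < mu y) ->
  \rank (Jac r x) = l ->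
  let J := Jac r x in
  let rx : 'cV[R]_m := (r x)^T in
  let Jp := mpinv J in
  let geta : 'cV[R]_l := (mu x)^-1 *: grad mu x in
  let p : 'cV[R]_l := - (Jp *m rx) in
  let beta := 1 - dotc p geta in
  let P : 'M[R]_m := 1%:M - J *m Jp in
  let omega := sqnorm2 (P *m rx) * sqnorm2 (Jp^T *m geta) + beta ^+ 2 in
  omega != 0 ->
  let Jmur := Jac (fun y => mu y *: r y) x in
  let phat : 'cV[R]_l := - (mpinv Jmur *m (mu x *: rx)) in
  let beta1 := beta / omega in
  let beta2 := - (sqnorm2 (P *m rx)) / omega in
  phat = beta1 *: p + beta2 *: (invmx (J^T *m J) *m geta).
Proof.
move=> dr mu_near rkJ J rx Jp geta p beta P omega omega_neq0 Jmur phat beta1 beta2.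
have [dmu mu_gt0] := nbhs_singleton mu_near.
have J_ker0 := col_full_mulmx_eq0 rkJ.
have JpE : Jp = invmx (J^T *m J) *m J^T := mpinv_ker0 J_ker0.
have gram_unit := gram_unitmx J_ker0.
have A_ker0 := rank_one_update_ker0 gram_unit JpE omega_neq0.
have Jmur_rank_one : Jmur = mu x *: (J + rx *m geta^T).
  rewrite /Jmur Jac_scalev // scalerDr; congr (_ + _).
  by rewrite /geta [(_ *: _)^T]linearZ /= -!scalemxAr scalerA mulfV ?gt_eqF // scale1r.
rewrite /phat Jmur_rank_one mpinvZ_mulmxZ ?gt_eqF //.
by rewrite (mpinv_normal_eq A_ker0 (rank_one_update_normal_eq gram_unit JpE omega_neq0)) opprK.
Qed.
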